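(* Assume the standing hypotheses below. For each $n<\omega$ let $X_n$ be a fixed basis of $G_n$, let $\mathcal{B}_n$ be the family of all subgroups of $G_n$ generated by subsets of $X_n$, and let $\mathcal{B}'_n = \{ A \in \mathcal{B}_n : A + G_i \text{ is pure in } G \text{ for every } i<\omega\}$. Then the collection $$\mathcal{B} = \{ A \le G : A \cap G_n \in \mathcal{B}'_n \text{ for every } n < \omega \}$$ is a $G(\aleph_0)$-family of $G$ consisting of pure subgroups of $G$.
   Context: Standing hypotheses: $G$ is a torsion-free abelian group and $0 = G_0 < G_1 < \dots < G_n < \dots$ ($n<\omega$) is an ascending chain of subgroups of $G$ such that every $G_n$ is free, every $G_n$ is a pure subgroup of $G$, and $G = \bigcup_{n<\omega} G_n$. A subgroup $H$ of an abelian group $G$ is pure if solubility in $G$ of every equation $nx = h$ with $n\in\mathbb{Z}$, $h\in H$ implies its solubility in $H$. A $G(\aleph_0)$-family of an abelian group $M$ is a collection $\mathcal{C}$ of subgroups of $M$ such that: (i) $0 \in \mathcal{C}$ and $M \in \mathcal{C}$; (ii) $\mathcal{C}$ is closed under unions of ascending chains; (iii) for every $A_0 \in \mathcal{C}$ and every countable subset $H \subseteq M$ there exists $A \in \mathcal{C}$ with $A_0 \cup H \subseteq A$ and $A/A_0$ countable. *)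

From HB Require Import structures.
From mathcomp Require Import all_boot all_order all_algebra.
Set Implicit Arguments. Unset Strict Implicit. Unset Printing Implicit Defensive.
Import GRing.Theory.
Local Open Scope ring_scope.

Section Defs.
Variable G : zmodType.

Definition subgrp (H : G -> Prop) : Prop :=
  H 0 /\ forall x y, H x -> H y -> H (x - y).

Definition subset (A B : G -> Prop) : Prop := forall x, A x -> B x.

Definition torsion_free : Prop :=
  forall (x : G) (n : nat), x *+ n.+1 = 0 -> x = 0.

Definition pure (H : G -> Prop) : Prop :=
  forall (n : int) (h : G), H h -> (exists x : G, x *~ n = h) ->
    exists y, H y /\ y *~ n = h.

Definition gen (S : G -> Prop) (x : G) : Prop :=
  exists s : seq (int * G), (forall p, p \in s -> S p.2) /\
    x = \sum_(p <- s) p.2 *~ p.1.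

Definition independent (X : G -> Prop) : Prop :=
  forall (s : seq G) (c : nat -> int), uniq s -> (forall x, x \in s -> X x) ->
    \sum_(i < size s) s`_i *~ c i = 0 -> forall i, (i < size s)%N -> c i = 0.

Definition is_basis (H X : G -> Prop) : Prop :=
  subset X H /\ independent X /\ (forall x, H x <-> gen X x).

Definition free (H : G -> Prop) : Prop := subgrp H /\ exists X, is_basis H X.

Definition setI (A B : G -> Prop) : G -> Prop := fun x => A x /\ B x.
Definition setD (A B : G -> Prop) : G -> Prop :=
  fun x => exists a b, A a /\ B b /\ x = a + b.

Definition countable_set (S : G -> Prop) : Prop :=
  exists f : G -> nat, forall x y, S x -> S y -> f x = f y -> x = y.

(* A0 <= A and A/A0 is countable: an injection of the cosets into nat *)
Definition countable_quot (A A0 : G -> Prop) : Prop :=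
  exists f : G -> nat, forall x y, A x -> A y -> f x = f y -> A0 (x - y).

(* G(aleph_0)-family of the whole group G (M = G) *)
Definition G_aleph0_family (C : (G -> Prop) -> Prop) : Prop :=
  [/\ C (fun x => x = 0), C (fun _ => True),
      (forall (I : Type) (F : I -> G -> Prop), inhabited I ->
         (forall i, C (F i)) ->
         (forall i j, subset (F i) (F j) \/ subset (F j) (F i)) ->
         C (fun x => exists i, F i x))
    & (forall (A0 H : G -> Prop), C A0 -> countable_set H ->
         exists A, [/\ C A, subset A0 A, subset H A & countable_quot A A0])].

Definition good_chain (Gn : nat -> G -> Prop) : Prop :=
  [/\ torsion_free,
      (forall x, Gn 0%N x <-> x = 0),
      (forall n, subset (Gn n) (Gn n.+1) /\ exists x, Gn n.+1 x /\ ~ Gn n x),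
      (forall n, free (Gn n) /\ pure (Gn n))
    & (forall x, exists n, Gn n x)].

Definition calB (Gn : nat -> G -> Prop) (X : nat -> G -> Prop) (n : nat)
  (A : G -> Prop) : Prop :=
  exists S, subset S (X n) /\ forall x, A x <-> gen S x.

Definition calB' (Gn : nat -> G -> Prop) (X : nat -> G -> Prop) (n : nat)
  (A : G -> Prop) : Prop :=
  calB Gn X n A /\ forall i, pure (setD A (Gn i)).

Definition calBfam (Gn : nat -> G -> Prop) (X : nat -> G -> Prop)
  (A : G -> Prop) : Prop :=
  subgrp A /\ forall n, calB' Gn X n (setI A (Gn n)).

End Defs.

From Pilot Require Import Defs.
From HB Require Import structures.
From mathcomp Require Import all_boot all_order all_algebra.
From Stdlib Require Import ClassicalEpsilon.
Set Implicit Arguments. Unset Strict Implicit. Unset Printing Implicit Defensive.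
Import GRing.Theory.
Local Open Scope ring_scope.

(* Purity: an element h of A lies in some G_k, and (A \cap G_k) + G_0 =
   A \cap G_k is pure, so n x = h has a solution in A.
   The family contains 0 and G, and is closed under unions of chains since
   a finite set of generators from such a union lies in one member. Given A0 in the family and a countable
   H, we close H under countably many "witness" operations, obtaining a
   countable Y such that A = A0 + <Y> satisfies
   - A \cap G_n = (A0 \cap G_n) + <X_n \cap Y>, so A \cap G_n is in B_n;
   - (A \cap G_n) + G_i is pure, by correcting a solution found in G_n with
     the purity of (A0 \cap G_n) + G_i. *)

Section Subgroups.
Variable G : zmodType.
Implicit Types (K S T : G -> Prop) (x y z : G).

Lemma subgrp0 K : subgrp K -> K 0.
Proof. by case. Qed.

Lemma subgrpB K x y : subgrp K -> K x -> K y -> K (x - y).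
Proof. by move=> hK; apply: hK.2. Qed.

Lemma subgrpN K x : subgrp K -> K x -> K (- x).
Proof. by move=> hK Kx; rewrite -sub0r; apply: subgrpB (subgrp0 hK) Kx. Qed.

Lemma subgrpD K x y : subgrp K -> K x -> K y -> K (x + y).
Proof. by move=> hK Kx Ky; rewrite -[y]opprK; apply: subgrpB (subgrpN hK Ky). Qed.

Lemma subgrpMz K x (m : int) : subgrp K -> K x -> K (x *~ m).
Proof.
move=> hK Kx; have KMn (n : nat) : K (x *+ n).
  elim: n => [|n IH]; first by rewrite mulr0n; exact: subgrp0.
  by rewrite mulrS; apply: subgrpD.
by case: m => n; [exact: KMn | apply: subgrpN].
Qed.

Lemma subgrp_sum K (s : seq (int * G)) :
  subgrp K -> (forall p, p \in s -> K p.2) -> K (\sum_(p <- s) p.2 *~ p.1).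
Proof.
move=> hK hs; rewrite big_seq; apply: big_ind => [|u v|p /hs Kp].
- exact: subgrp0.
- exact: subgrpD.
- exact: subgrpMz.
Qed.

Lemma subgrpI K T : subgrp K -> subgrp T -> subgrp (Defs.setI K T).
Proof.
move=> hK hT; split; first by split; apply: subgrp0.
by move=> x y [Kx Tx] [Ky Ty]; split; apply: subgrpB.
Qed.

(* The sum K + T of two subgroups (named setD in Defs) is a subgroup. *)
Lemma subgrp_sumset K T : subgrp K -> subgrp T -> subgrp (Defs.setD K T).
Proof.
move=> hK hT; split; first by exists 0, 0; rewrite addr0; do !split; apply: subgrp0.
move=> _ _ [a [b [Ka [Tb ->]]]] [a' [b' [Ka' [Tb' ->]]]].
exists (a - a'), (b - b'); do !split; try exact: subgrpB.
by rewrite opprD addrACA.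
Qed.

Lemma sumset_l K T x : subgrp T -> K x -> Defs.setD K T x.
Proof. by move=> hT Kx; exists x, 0; rewrite addr0; do !split=> //; apply: subgrp0. Qed.

Lemma sumset_r K T x : subgrp K -> T x -> Defs.setD K T x.
Proof. by move=> hK Tx; exists 0, x; rewrite add0r; do !split=> //; apply: subgrp0. Qed.

Lemma sumset_absorbr K T x :
  subgrp K -> subgrp T -> Defs.subset K T -> Defs.setD K T x <-> T x.
Proof.
move=> hK hT KT; split; last exact: sumset_r.
by move=> [a [b [/KT Ta [Tb ->]]]]; apply: subgrpD.
Qed.

Lemma sumset_absorbl K T x :
  subgrp K -> subgrp T -> Defs.subset T K -> Defs.setD K T x <-> K x.
Proof.
move=> hK hT TK; split; last exact: sumset_l.
by move=> [a [b [Ka [/TK Kb ->]]]]; apply: subgrpD.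
Qed.

Lemma pure_ext K T : pure K -> (forall x, K x <-> T x) -> pure T.
Proof.
move=> pK hKT m h /hKT Kh hx; have [y [Ky hy]] := pK m h Kh hx.
by exists y; split => //; apply/hKT.
Qed.

Lemma gen_in S x : S x -> gen S x.
Proof.
move=> Sx; exists [:: (1%R, x)]; split; first by move=> p; rewrite inE => /eqP ->.
by rewrite big_seq1.
Qed.

Lemma gen_subgrp S : subgrp (gen S).
Proof.
split; first by exists [::]; rewrite big_nil.
move=> _ _ [s [hs ->]] [t [ht ->]].
exists (s ++ map (fun p => (- p.1, p.2)) t); split.
  by move=> p; rewrite mem_cat => /orP [/hs //|/mapP [q /ht qt ->]].
rewrite big_cat big_map -sumrN /=; congr (_ + _).
by apply: eq_bigr => p _; rewrite mulrNz.
Qed.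

Lemma gen_min S K x : subgrp K -> Defs.subset S K -> gen S x -> K x.
Proof. by move=> hK SK [s [hs ->]]; apply: subgrp_sum => // p /hs /SK. Qed.

Lemma gen_mono S T x : Defs.subset S T -> gen S x -> gen T x.
Proof. by move=> ST; apply: gen_min (gen_subgrp T) _ => z /ST /gen_in. Qed.

Lemma gen_empty x : gen (fun _ => False) x <-> x = 0.
Proof.
split; last by move=> ->; apply: subgrp0 (gen_subgrp _).
by move=> [[|p s] [hs ->]]; [rewrite big_nil | case: (hs p (mem_head _ _))].
Qed.

(* An element generated by the union of a chain of sets is generated by
   one member of the chain: a linear combination involves finitely many
   generators. *)
Lemma gen_chain (I : Type) (F : I -> G -> Prop) x :
  inhabited I -> (forall i j, Defs.subset (F i) (F j) \/ Defs.subset (F j) (F i)) ->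
  gen (fun z => exists i, F i z) x -> exists i, gen (F i) x.
Proof.
move=> [i0] hcmp [s [hs ->]].
suff [i hi] : exists i, forall p, p \in s -> F i p.2.
  by exists i; exists s.
elim: s hs => [|q s IH] hs; first by exists i0.
have [i Fi] := hs q (mem_head _ _).
have [j Fj] := IH (fun p ps => hs p (mem_behead (s := q :: s) ps)).
case: (hcmp i j) => hij.
  by exists j => p; rewrite inE => /orP [/eqP -> | /Fj //]; apply: hij.
by exists i => p; rewrite inE => /orP [/eqP -> // | /Fj]; apply: hij.
Qed.

Definition support S x : seq G :=
  map snd (epsilon (inhabits [::]) (fun s : seq (int * G) =>
     (forall p, p \in s -> S p.2) /\ x = \sum_(p <- s) p.2 *~ p.1)).

Lemma supportP S T x :
  gen S x -> (forall z, z \in support S x -> T z) -> gen (Defs.setI S T) x.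
Proof.
move=> hx hT; have [hS ->] := epsilon_spec (inhabits [::]) _ hx.
eexists; split; last by reflexivity.
by move=> p ps; split; [exact: hS | apply: hT; apply: map_f].
Qed.

End Subgroups.

Section Countability.
Variable G : zmodType.
Implicit Types (S T : G -> Prop).

Definition enumerable S : Prop := exists e : nat -> G, forall z, S z -> exists c, e c = z.

Lemma countable_enumerable S : countable_set S -> enumerable S.
Proof.
move=> [f inj_f].
exists (fun c => epsilon (inhabits 0) (fun z => S z /\ f z = c)) => z Sz.
exists (f z); have hz : exists y, S y /\ f y = f z by exists z.
by have [Sy fy] := epsilon_spec (inhabits 0) _ hz; apply: inj_f.
Qed.

Lemma enumerableU S T : enumerable S -> enumerable T -> enumerable (fun z => S z \/ T z).
Proof.
move=> [eS hS] [eT hT].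
exists (fun c => if odd c then eT c./2 else eS c./2) => z [/hS [c <-]|/hT [c <-]].
  by exists c.*2%N; rewrite odd_double doubleK.
by exists (true + c.*2)%N; rewrite oddD odd_double half_bit_double.
Qed.

Lemma enumerable_bigcup (S : nat -> G -> Prop) :
  (forall k, enumerable (S k)) -> enumerable (fun z => exists k, S k z).
Proof.
move=> hS; pose e k := proj1_sig (constructive_indefinite_description _ (hS k)).
exists (fun c => if unpickle c is Some (k, j) then e k j else 0) => z [k Skz].
have [j ej] := proj2_sig (constructive_indefinite_description _ (hS k)) z Skz.
by exists (pickle (k, j)); rewrite pickleK.
Qed.

(* The subgroup generated by an enumerable set is enumerable: its elements
   are indexed by finite lists of (coefficient, index) pairs. *)
Lemma enumerable_gen S : enumerable S -> enumerable (gen S).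
Proof.
move=> [e hS].
exists (fun c => if unpickle c is Some t then \sum_(p <- t) e p.2 *~ p.1 else 0).
move=> _ [s [hs ->]].
suff [t ->] : exists t : seq (int * nat),
    \sum_(p <- s) p.2 *~ p.1 = \sum_(p <- t) e p.2 *~ p.1.
  by exists (pickle t); rewrite pickleK.
elim: s hs => [|q s IH] hs; first by exists [::]; rewrite !big_nil.
have [c ec] := hS _ (hs q (mem_head _ _)).
have [t ht] := IH (fun p ps => hs p (mem_behead (s := q :: s) ps)).
by exists ((q.1, c) :: t); rewrite !big_cons ht ec.
Qed.

Lemma enumerable_image (K : countType) (w : K -> G -> seq G) S :
  enumerable S -> enumerable (fun z => exists k y, S y /\ z \in w k y).
Proof.
move=> [e hS].
exists (fun c => if unpickle c is Some (j, k, i) then nth 0 (w k (e j)) i else 0).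
move=> z [k [_ [/hS [j <-] zw]]].
by exists (pickle (j, k, index z (w k (e j)))); rewrite pickleK nth_index.
Qed.

Section Closure.
Variables (K : countType) (w : K -> G -> seq G) (H : G -> Prop).

Fixpoint closure_stage (k : nat) : G -> Prop :=
  if k is k'.+1 then fun z =>
    closure_stage k' z \/ exists kk y, gen (closure_stage k') y /\ z \in w kk y
  else H.

Lemma closure_stage_mono k l : (k <= l)%N -> Defs.subset (closure_stage k) (closure_stage l).
Proof.
move=> /subnKC <-; elim: (l - k)%N => [|d IH] z; first by rewrite addn0.
by rewrite addnS => /IH; left.
Qed.

Lemma countable_closure : enumerable H ->
  exists Y, [/\ enumerable Y, Defs.subset H Y &
     forall kk y, gen Y y -> forall z, z \in w kk y -> Y z].
Proof.
move=> hH; exists (fun z => exists k, closure_stage k z); split.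
- apply: enumerable_bigcup; elim=> [|k IH] //=.
  by apply: enumerableU IH (enumerable_image w (enumerable_gen IH)).
- by move=> z Hz; exists 0%N.
move=> kk y /gen_chain [||k hk z zw]; first exact: inhabits 0%N.
  by move=> k l; case: (leqP k l) => [/closure_stage_mono|/ltnW/closure_stage_mono]; auto.
by exists k.+1; right; exists kk, y.
Qed.

End Closure.

Lemma countable_quot_cover (A A0 B : G -> Prop) : subgrp A0 -> enumerable B ->
  (forall x, A x -> exists b, B b /\ A0 (x - b)) -> countable_quot A A0.
Proof.
move=> hA0 [e hB] hA.
pose f x := epsilon (inhabits 0%N) (fun c => A0 (x - e c)).
have hf x : A x -> A0 (x - e (f x)).
  move=> /hA [b [/hB [c <-] xb]]; have hc : exists c, A0 (x - e c) by exists c.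
  exact: (epsilon_spec _ _ hc).
exists f => x y Ax Ay fxy.
have -> : x - y = (x - e (f x)) - (y - e (f y)) by rewrite fxy opprB addrA subrK.
by apply: subgrpB hA0 (hf x Ax) (hf y Ay).
Qed.

End Countability.

Section Chain.
Variables (G : zmodType) (Gn : nat -> G -> Prop) (X : nat -> G -> Prop).
Hypothesis chainG : good_chain Gn.
Hypothesis basisX : forall n, is_basis (Gn n) (X n).

Lemma chain_subgrp n : subgrp (Gn n).
Proof. by case: chainG => _ _ _ /(_ n) [[]]. Qed.

Lemma chain_pure n : pure (Gn n).
Proof. by case: chainG => _ _ _ /(_ n) []. Qed.

Lemma chain_mono m k : (m <= k)%N -> Defs.subset (Gn m) (Gn k).
Proof.
case: chainG => _ _ step _ _ /subnKC <-; elim: (k - m)%N => [|d IH] x.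
  by rewrite addn0.
by rewrite addnS => /IH; apply: (step _).1.
Qed.

Lemma basis_gen n x : Gn n x <-> gen (X n) x.
Proof. exact: (basisX n).2.2. Qed.

(* A subgroup K of G_i does not change G_i when added, so K + G_i is pure. *)
Lemma pure_sum_chain (K : G -> Prop) i :
  subgrp K -> Defs.subset K (Gn i) -> pure (Defs.setD K (Gn i)).
Proof.
move=> hK KGi; apply: (@pure_ext _ (Gn i)) => [|x]; first exact: chain_pure.
by symmetry; apply: sumset_absorbr (chain_subgrp i) _.
Qed.

Lemma fam_zero : calBfam Gn X (fun x => x = 0).
Proof.
have hK n : subgrp (Defs.setI (fun x : G => x = 0) (Gn n)).
  by apply: subgrpI (chain_subgrp n); split=> // x y -> ->; rewrite subr0.
split=> [|n]; first by split=> // x y -> ->; rewrite subr0.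
split=> [|i]; last by apply: pure_sum_chain (hK n) _ => x [-> _]; apply: subgrp0 (chain_subgrp i).
exists (fun _ => False); split=> // x; rewrite gen_empty.
by split=> [[]//|->]; apply: subgrp0 (hK n).
Qed.

Lemma fam_top : calBfam Gn X (fun _ => True).
Proof.
split=> // n; have hK : subgrp (Defs.setI (fun _ : G => True) (Gn n)).
  by apply: subgrpI (chain_subgrp n).
split=> [|i].
  by exists (X n); split=> // x; rewrite -basis_gen; split=> [[]|].
case: (leqP n i) => [ni|/ltnW ni].
  by apply: pure_sum_chain hK _ => x [_ /(chain_mono ni)].
apply: (@pure_ext _ (Gn n)) => [|x]; first exact: chain_pure.
rewrite sumset_absorbl //; last by move=> z /(chain_mono ni).
  by split=> [|[]].
exact: chain_subgrp.
Qed.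

Lemma fam_union (I : Type) (F : I -> G -> Prop) :
  inhabited I -> (forall i, calBfam Gn X (F i)) ->
  (forall i j, Defs.subset (F i) (F j) \/ Defs.subset (F j) (F i)) ->
  calBfam Gn X (fun x => exists i, F i x).
Proof.
move=> hI hF hcmp; pose U x := exists i, F i x.
have genU x : gen U x -> U x.
  by move=> /gen_chain [] // i /(gen_min (hF i).1 (fun z Fz => Fz)); exists i.
have sgU : subgrp U.
  split=> [|x y Ux Uy]; last by apply: genU; apply: subgrpB (gen_subgrp U) _ _; apply: gen_in.
  by case: hI => i; exists i; apply: subgrp0 (hF i).1.
split=> // n; split.
  exists (fun z => X n z /\ U z); split=> [z []//|x]; split.
    move=> [[i Fx] Gx]; have [[S [SX hS]] _] := (hF i).2 n.
    apply: gen_mono (proj1 (hS x) (conj Fx Gx)) => z Sz.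
    by split; [exact: SX | exists i; case: (proj2 (hS z) (gen_in Sz))].
  move=> hx; split; first by apply: genU; apply: gen_mono hx => z [].
  by apply/basis_gen; apply: gen_mono hx => z [].
move=> i m _ [a [b [[[j Fa] Ga] [Gb ->]]]] hx.
have [_ pure_j] := (hF j).2 n.
have [y [[a' [b' [[Fa' Ga'] [Gb' ->]]]] hy]] := pure_j i m (a + b)
   (ex_intro _ a (ex_intro _ b (conj (conj Fa Ga) (conj Gb erefl)))) hx.
by exists (a' + b'); split=> //; exists a', b'; do !split=> //; exists j.
Qed.

(* Members of the family are pure: an element h of A lies in some G_k, and
   A \cap G_k = (A \cap G_k) + G_0 is pure since G_0 = 0. *)
Lemma fam_pure (A : G -> Prop) : calBfam Gn X A -> pure A.
Proof.
case: chainG => _ G0 _ _ exhaust [_ hA] m h Ah hx.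
have [k Gh] := exhaust h; have [_ /(_ 0%N) pure_k] := hA k.
have hD : Defs.setD (Defs.setI A (Gn k)) (Gn 0%N) h.
  by exists h, 0; rewrite addr0; do !split=> //; apply/G0.
have [y [[a [b [[Aa _] [/G0 -> ->]]]] hy]] := pure_k m h hD hx.
by rewrite addr0 in hy; exists a.
Qed.

Definition pick_support (n : nat) (P : G -> Prop) : seq G :=
  support (X n) (epsilon (inhabits 0) P).

Lemma pick_supportP n (P Y : G -> Prop) :
  (exists g, P g) -> Defs.subset P (Gn n) ->
  (forall z, z \in pick_support n P -> Y z) ->
  exists g, P g /\ gen (Defs.setI (X n) Y) g.
Proof.
move=> exP PGn hY; have Pg := epsilon_spec (inhabits 0) P exP.
by exists (epsilon (inhabits 0) P); split=> //; apply: supportP hY; apply/basis_gen/PGn.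
Qed.

Section Extension.
Variable A0 : G -> Prop.
Hypothesis famA0 : calBfam Gn X A0.

(* The countably many witnesses needed to enlarge A0 inside the family:
   - [inl n] at y: the support of a G_n-part g of y modulo A0;
   - [inr (n, i, m)] at y: the support of a solution x in G_n of
     m x = y modulo (A0 \cap G_n) + G_i. *)
Definition ext_witness (kk : nat + nat * nat * int) (y : G) : seq G :=
  match kk with
  | inl n => pick_support n (fun g => Gn n g /\ A0 (y - g))
  | inr (n, i, m) => pick_support n
      (fun x => Gn n x /\ Defs.setD (Defs.setI A0 (Gn n)) (Gn i) (x *~ m - y))
  end.

Variable Y : G -> Prop.
Hypothesis closedY : forall kk y, gen Y y -> forall z, z \in ext_witness kk y -> Y z.

Let A := Defs.setD A0 (gen Y).

Lemma ext_subgrp : subgrp A.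
Proof. exact: subgrp_sumset famA0.1 (gen_subgrp Y). Qed.

Lemma ext_meet n a : Defs.setI A (Gn n) a ->
  exists b g, [/\ Defs.setI A0 (Gn n) b, gen (Defs.setI (X n) Y) g & a = b + g].
Proof.
move=> [[a0 [y [A0a0 [Yy ->]]]] Gna].
have exP : exists g, Gn n g /\ A0 (y - g).
  exists (a0 + y); split=> //.
  by rewrite opprD addrCA subrr addr0; apply: subgrpN famA0.1 _.
have [g [[Gng A0yg] Yg]] :=
  pick_supportP exP (fun _ hP => hP.1) (closedY (kk := inl n) Yy).
exists (a0 + y - g), g; split=> //; last by rewrite subrK.
split; last exact: subgrpB (chain_subgrp n) Gna Gng.
by rewrite -addrA; apply: subgrpD famA0.1 A0a0 A0yg.
Qed.

Lemma ext_calB n : calB Gn X n (Defs.setI A (Gn n)).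
Proof.
have [[S [SX hS]] _] := famA0.2 n.
exists (fun z => S z \/ Defs.setI (X n) Y z); split=> [z [/SX|[]] // | x]; split.
  move=> /ext_meet [b [g [/hS Sb Yg ->]]].
  by apply: subgrpD (gen_subgrp _) (gen_mono _ Sb) (gen_mono _ Yg) => z; [left|right].
apply: gen_min; first exact: subgrpI ext_subgrp (chain_subgrp n).
move=> z [/gen_in/hS [A0z Gz] | [Xz Yz]]; split=> //.
- exact: sumset_l (gen_subgrp Y) A0z.
- exact: sumset_r famA0.1 (gen_in Yz).
- exact: (basisX n).1.
Qed.

(* The purity of (A \cap G_n) + G_i, the heart of the argument: a solution
   found in G_n is corrected, via the witness of <Y> and the purity of
   (A0 \cap G_n) + G_i, into a solution in (A \cap G_n) + G_i. *)
Lemma ext_pure n i : pure (Defs.setD (Defs.setI A (Gn n)) (Gn i)).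
Proof.
have hAn := subgrpI ext_subgrp (chain_subgrp n).
case: (leqP n i) => [ni | /ltnW lt_in].
  by apply: pure_sum_chain hAn _ => x [_ /(chain_mono ni)].
pose Q := Defs.setD (Defs.setI A0 (Gn n)) (Gn i).
have sgQ : subgrp Q := subgrp_sumset (subgrpI famA0.1 (chain_subgrp n)) (chain_subgrp i).
have pureQ : pure Q by have [_ /(_ i)] := famA0.2 n.
move=> m _ [a [g0 [Aa [Gig0 ->]]]] hx.
have Gnp : Gn n (a + g0) by apply: subgrpD (chain_subgrp n) Aa.2 (chain_mono lt_in Gig0).
have [x1 [Gnx1 hx1]] := chain_pure Gnp hx.
have [b [g [[A0b Gnb] Yg ea]]] := ext_meet Aa; subst a.
have Qx1 : Q (x1 *~ m - g) by exists b, g0; rewrite hx1 addrAC addrK.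
have gY : gen Y g by apply: gen_mono Yg => z [].
have exP : exists x, Gn n x /\ Q (x *~ m - g) by exists x1.
have [x2 [[Gnx2 Qx2] Yx2]] :=
  pick_supportP exP (fun _ hP => hP.1) (closedY (kk := inr (n, i, m)) gY).
have Qd : Q ((x1 - x2) *~ m).
  have := subgrpB sgQ Qx1 Qx2.
  by rewrite opprD opprK addrACA addNr addr0 -mulrzBl.
have [_ [[a' [b' [[A0a' Gna'] [Gib' ->]]]] hw]] :=
  pureQ m _ Qd (ex_intro _ (x1 - x2) erefl).
exists (x2 + (a' + b')); split.
  exists (x2 + a'), b'; rewrite addrA; do !split=> //.
  - apply: subgrpD ext_subgrp _ (sumset_l (gen_subgrp Y) A0a').
    by apply: sumset_r famA0.1 _; apply: gen_mono Yx2 => z [].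
  - exact: subgrpD (chain_subgrp n) Gnx2 Gna'.
by rewrite mulrzDl hw -mulrzDl addrC subrK hx1.
Qed.

Lemma ext_fam : calBfam Gn X A.
Proof. by split=> [|n]; [exact: ext_subgrp | split; [exact: ext_calB | exact: ext_pure]]. Qed.

End Extension.

Lemma fam_extend (A0 H : G -> Prop) : calBfam Gn X A0 -> countable_set H ->
  exists A, [/\ calBfam Gn X A, Defs.subset A0 A, Defs.subset H A & countable_quot A A0].
Proof.
move=> famA0 /countable_enumerable enumH.
have [Y [enumY HY closedY]] := countable_closure (ext_witness A0) enumH.
exists (Defs.setD A0 (gen Y)); split.
- exact: ext_fam closedY.
- by move=> x; apply: sumset_l (gen_subgrp Y).
- by move=> x /HY/gen_in; apply: sumset_r famA0.1.
apply: countable_quot_cover famA0.1 (enumerable_gen enumY) _.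
by move=> _ [a [y [A0a [Yy ->]]]]; exists y; rewrite addrK.
Qed.

End Chain.

Theorem lemma3 (G : zmodType) (Gn : nat -> G -> Prop) (X : nat -> G -> Prop) :
  good_chain Gn ->
  (forall n, is_basis (Gn n) (X n)) ->
  G_aleph0_family (calBfam Gn X) /\
  (forall A, calBfam Gn X A -> subgrp A /\ pure A).
Proof.
move=> chainG basisX; split; last by move=> A famA; split; [exact: famA.1 | exact: fam_pure famA].
split.
- exact: fam_zero.
- exact: fam_top.
- by move=> I F; apply: fam_union.
- by move=> A0 H; apply: fam_extend.
Qed.
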